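(* Under the hypotheses and notation of the following setting, let $0 \le \mathcal{Q}_l \le \mathcal{Q}_u < \mathbf{C}_0(N_0)$ and let $\bar{x}_l$ and $\bar{x}_u$ be the coordinates returned by the hierarchical search procedure on queries $\mathcal{Q}_l$ and $\mathcal{Q}_u$ respectively. Then $\big|\,(\mathbf{C}(\bar{x}_u) - \mathbf{C}(\bar{x}_l)) - (\mathcal{Q}_u - \mathcal{Q}_l)\,\big| < \Delta_{d-1}$. Consequently, if queries $\mathcal{Q}_0 \le \mathcal{Q}_1 \le \cdots$ are equally spaced with spacing $s$ (and all lie in $[0,\mathbf{C}_0(N_0))$), then for any two consecutive partitions $[\bar{x}^{(p)}, \bar{x}^{(p+1)})$ and $[\bar{x}^{(q)}, \bar{x}^{(q+1)})$ the costs $\mathbf{C}(\bar{x}^{(p+1)})-\mathbf{C}(\bar{x}^{(p)})$ and $\mathbf{C}(\bar{x}^{(q+1)})-\mathbf{C}(\bar{x}^{(q)})$ differ by less than $2\Delta_{d-1}$.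
   Context: Setting: $d \ge 1$, positive integers $N_0,\ldots,N_{d-1}$. For each $m$ and each prefix $\bar{x}_m=(x_0,\ldots,x_{m-1})$ with $x_k\in\{0,\ldots,N_k-1\}$, a cost function $\mathbf{C}_m(\cdot\mid\bar{x}_m):\{0,\ldots,N_m\}\to\mathbb{R}_{\ge0}$ with $\mathbf{C}_m(0\mid\bar{x}_m)=0$, monotone ($\mathbf{C}_m(x\mid\bar{x}_m)\le\mathbf{C}_m(x+1\mid\bar{x}_m)$), and hierarchically consistent: for $m<d-1$ and $x_m\in\{0,\ldots,N_m-1\}$, $\mathbf{C}_m(x_m+1\mid\bar{x}_m)=\mathbf{C}_m(x_m\mid\bar{x}_m)+\mathbf{C}_{m+1}(N_{m+1}\mid\bar{x}_m,x_m)$. $\Delta_{d-1}$ is the maximum of $\mathbf{C}_{d-1}(x+1\mid\bar{x}_{d-1})-\mathbf{C}_{d-1}(x\mid\bar{x}_{d-1})$ over all prefixes $\bar{x}_{d-1}$ and $0\le x<N_{d-1}$. For $\bar{x}=(x_0,\ldots,x_{d-1})$, $\mathbf{C}(\bar{x})=\sum_{m=0}^{d-1}\mathbf{C}_m(x_m\mid x_0,\ldots,x_{m-1})$. The hierarchical search procedure on query $\mathcal{Q}$: set $\mathcal{R}_0=\mathcal{Q}$; for $m=0,\ldots,d-1$, let $x_m$ be the largest $x\in\{0,\ldots,N_m-1\}$ with $\mathbf{C}_m(x\mid x_0,\ldots,x_{m-1})\le\mathcal{R}_m$ and set $\mathcal{R}_{m+1}=\mathcal{R}_m-\mathbf{C}_m(x_m\mid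 x_0,\ldots,x_{m-1})$; return $(x_0,\ldots,x_{d-1})$. *)

From HB Require Import structures.
From mathcomp Require Import all_boot all_order all_algebra.
Set Implicit Arguments. Unset Strict Implicit. Unset Printing Implicit Defensive.
Import Order.TTheory GRing.Theory Num.Theory.
Local Open Scope ring_scope.

(* A cost family: C m p x = C_m(x | p), where p : seq nat is the prefix
   (x_0,...,x_{m-1}).  Values outside the valid domain are irrelevant. *)
Section HierSearch.
Variable R : realFieldType.
Variable d : nat.
Variable N : nat -> nat.
Variable C : nat -> seq nat -> nat -> R.

Definition valid_prefix (m : nat) (p : seq nat) : bool :=
  (size p == m) && [forall k : 'I_m, nth 0%N p k < N k]%N.

Fixpoint prefixes (m : nat) : seq (seq nat) :=
  match m with
  | 0 => [:: [::]]
  | m'.+1 => [seq rcons p x | p <- prefixes m', x <- iota 0 (N m')]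
  end.

(* Delta_{d-1}: maximal one-step increment of the last-level cost
   (all increments are >= 0 by monotonicity, so 0 is a neutral start). *)
Definition Delta : R :=
  \big[Num.max/0]_(p <- prefixes d.-1)
     \big[Num.max/0]_(x < N d.-1) (C d.-1 p x.+1 - C d.-1 p x).

(* largest x in {0,...,N_m - 1} with C_m(x | p) <= r (0 if none) *)
Definition largest_le (m : nat) (p : seq nat) (r : R) : nat :=
  \max_(x < N m | (C m p x <= r)%R) (x : nat).

Fixpoint hsearch_aux (k m : nat) (p : seq nat) (r : R) : seq nat :=
  match k with
  | 0 => p
  | k'.+1 =>
      let x := largest_le m p r in
      hsearch_aux k' m.+1 (rcons p x) (r - C m p x)
  end.

Definition hsearch (Q : R) : seq nat := hsearch_aux d 0 [::] Q.

Definition Ctot (x : seq nat) : R :=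
  \sum_(m < size x) C m (take m x) (nth 0%N x m).

End HierSearch.

From HB Require Import structures.
From mathcomp Require Import all_boot all_order all_algebra.
From mathcomp Require Import lra zify.
Import Order.TTheory GRing.Theory Num.Theory.
Local Open Scope ring_scope.
Set Implicit Arguments. Unset Strict Implicit.

(* The search keeps the invariant  Ctot(prefix) + budget = Q  with
   0 <= budget < C_m(N_m | prefix): choosing the largest x_m with
   C_m(x_m) <= R_m leaves R_m - C_m(x_m) < C_m(x_m + 1) - C_m(x_m), which by
   hierarchical consistency is C_{m+1}(N_{m+1} | prefix, x_m).  At the last
   level the leftover budget is a single increment of C_{d-1}, so
   Q - C(hsearch Q) lies in [0, Delta), and two such errors differ by less
   than Delta. *)

Section HierarchicalSearch.
Variable R : realFieldType.
Variable d : nat.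
Variable N : nat -> nat.
Variable C : nat -> seq nat -> nat -> R.

Lemma Ctot_rcons p x : Ctot C (rcons p x) = Ctot C p + C (size p) p x.
Proof.
rewrite /Ctot size_rcons big_ord_recr /= -cats1; congr (_ + _).
  apply: eq_bigr => i _.
  by rewrite takel_cat ?(ltnW (ltn_ord i)) // nth_cat ltn_ord.
by rewrite take_size_cat // nth_cat ltnn subnn.
Qed.

Lemma valid_prefix0 : valid_prefix N 0 [::].
Proof. by apply/andP; split => //; apply/forallP => -[]. Qed.

Lemma valid_prefix_rcons m p x : valid_prefix N m p -> (x < N m)%N ->
  valid_prefix N m.+1 (rcons p x).
Proof.
case/andP=> /eqP sp /forallP Hp hx; apply/andP; split; first by rewrite size_rcons sp.
apply/forallP=> i; rewrite nth_rcons sp.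
have [lt_im|ge_im] := ltnP i m; first exact: (Hp (Ordinal lt_im)).
have -> : nat_of_ord i = m by apply/eqP; rewrite eqn_leq ge_im -ltnS ltn_ord.
by rewrite eqxx.
Qed.

Lemma mem_prefixes m p : valid_prefix N m p -> p \in prefixes N m.
Proof.
elim: m p => [|m IH] p.
  by case/andP=> /eqP /size0nil -> _; rewrite inE.
case/lastP: p => [|p x]; first by case/andP.
case/andP=> /eqP; rewrite size_rcons => -[sp] /forallP Hp /=.
apply: allpairs_f.
  apply: IH; apply/andP; split; first by rewrite sp.
  apply/forallP=> i; have := Hp (widen_ord (leqnSn _) i).
  by rewrite /= nth_rcons sp ltn_ord.
have := Hp ord_max; rewrite /= nth_rcons sp ltnn eqxx => hx.
by rewrite mem_iota add0n.
Qed.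

Lemma increment_le_Delta p x : valid_prefix N d.-1 p -> (x < N d.-1)%N ->
  C d.-1 p x.+1 - C d.-1 p x <= Delta d N C.
Proof.
move=> vp hx; apply: bigmax_sup_seq (mem_prefixes vp) _ _ => //.
exact: (le_bigmax _ _ (Ordinal hx)).
Qed.

Lemma largest_le_bracket m p r : (0 < N m)%N ->
  C m p 0%N <= r < C m p (N m) ->
  let x := largest_le N C m p r in
  (x < N m)%N /\ C m p x <= r < C m p x.+1.
Proof.
move=> hNm /andP[h0 hr] /=; rewrite /largest_le.
set A := [pred i : 'I_(N m) | C m p i <= r].
have [|i0 Ai0 max_eq] := @eq_bigmax_cond _ A val.
  by apply/card_gt0P; exists (Ordinal hNm).
rewrite max_eq; split; first exact: ltn_ord.
have Ci0 : C m p i0 <= r := Ai0.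
rewrite Ci0 /=.
have [lt_next|ge_next] := ltnP i0.+1 (N m); last first.
  by have -> : i0.+1 = N m by apply/anti_leq; rewrite ge_next ltn_ord.
rewrite ltNge; apply/negP => Anext.
by have := @leq_bigmax_cond _ A val (Ordinal lt_next) Anext; rewrite max_eq ltnn.
Qed.

Lemma hsearch_auxS k m p r : let x := largest_le N C m p r in
  hsearch_aux N C k.+1 m p r = hsearch_aux N C k m.+1 (rcons p x) (r - C m p x).
Proof. by []. Qed.

Hypothesis hN : forall m, (m < d)%N -> (0 < N m)%N.
Hypothesis hC0 : forall m p, (m < d)%N -> valid_prefix N m p -> C m p 0%N = 0.
Hypothesis hChier : forall m p x, (m.+1 < d)%N -> valid_prefix N m p -> (x < N m)%N ->
  C m p x.+1 = C m p x + C m.+1 (rcons p x) (N m.+1).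

Lemma hsearch_aux_residual k m p r :
  (m + k.+1 = d)%N -> valid_prefix N m p -> 0 <= r < C m p (N m) ->
  0 <= Ctot C p + r - Ctot C (hsearch_aux N C k.+1 m p r) < Delta d N C.
Proof.
elim: k m p r => [|k IH] m p r hmk vp /andP[r_ge0 r_lt].
all: have lt_md : (m < d)%N by rewrite -hmk addnS ltnS leq_addr.
all: have := @largest_le_bracket m p r (hN lt_md).
all: rewrite hC0 // r_ge0 r_lt => /(_ isT).
all: rewrite hsearch_auxS.
all: set x := largest_le N C m p r => -[hx /andP[Cx_le Cx1_gt]].
all: have sp : size p = m by case/andP: vp => /eqP.
- have em : m = d.-1 by rewrite -hmk addn1.
  have := @increment_le_Delta p x; rewrite -em => /(_ vp hx) inc_le.
  rewrite Ctot_rcons sp; apply/andP; split; lra.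
- have next_budget : 0 <= r - C m p x < C m.+1 (rcons p x) (N m.+1).
    have lt_m1d : (m.+1 < d)%N by lia.
    by move: Cx1_gt; rewrite hChier // => ?; apply/andP; split; lra.
  have := IH m.+1 (rcons p x) _ ltac:(lia) (valid_prefix_rcons vp hx) next_budget.
  by rewrite Ctot_rcons sp addrACA subrr addr0.
Qed.

Lemma hsearch_residual Q : (0 < d)%N -> 0 <= Q < C 0%N [::] (N 0%N) ->
  0 <= Q - Ctot C (hsearch d N C Q) < Delta d N C.
Proof.
case: d hsearch_aux_residual => // k residual _ hQ.
have := residual k 0 [::] Q (add0n _) valid_prefix0 hQ.
by rewrite /hsearch /Ctot big_ord0 add0r.
Qed.

Lemma hsearch_cost_diff Ql Qu : (0 < d)%N ->
  0 <= Ql < C 0%N [::] (N 0%N) -> 0 <= Qu < C 0%N [::] (N 0%N) ->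
  `|(Ctot C (hsearch d N C Qu) - Ctot C (hsearch d N C Ql)) - (Qu - Ql)|
    < Delta d N C.
Proof.
move=> d_gt0 /(hsearch_residual d_gt0)/andP[? ?] /(hsearch_residual d_gt0)/andP[? ?].
rewrite ltr_norml; apply/andP; split; lra.
Qed.

End HierarchicalSearch.

Theorem mainTheorem2 (R : realFieldType) (d : nat) (N : nat -> nat)
    (C : nat -> seq nat -> nat -> R)
    (hd : (1 <= d)%N)
    (hN : forall m, (m < d)%N -> (0 < N m)%N)
    (hC0 : forall m p, (m < d)%N -> valid_prefix N m p -> C m p 0%N = 0)
    (hCnn : forall m p x, (m < d)%N -> valid_prefix N m p -> (x <= N m)%N ->
       0 <= C m p x)
    (hCmono : forall m p x, (m < d)%N -> valid_prefix N m p -> (x < N m)%N ->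
       C m p x <= C m p x.+1)
    (hChier : forall m p x, (m.+1 < d)%N -> valid_prefix N m p -> (x < N m)%N ->
       C m p x.+1 = C m p x + C m.+1 (rcons p x) (N m.+1)) :
  (forall Ql Qu : R, 0 <= Ql -> Ql <= Qu -> Qu < C 0%N [::] (N 0%N) ->
     `| (Ctot C (hsearch d N C Qu) - Ctot C (hsearch d N C Ql)) - (Qu - Ql) |
       < Delta d N C)
  /\
  (forall (Q : nat -> R) (s : R) (n : nat),
     0 <= s ->
     (forall i, Q i.+1 - Q i = s) ->
     (forall i, (i <= n)%N -> 0 <= Q i /\ Q i < C 0%N [::] (N 0%N)) ->
     forall p q, (p < n)%N -> (q < n)%N ->
     `| (Ctot C (hsearch d N C (Q p.+1)) - Ctot C (hsearch d N C (Q p)))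
        - (Ctot C (hsearch d N C (Q q.+1)) - Ctot C (hsearch d N C (Q q))) |
       < 2 * Delta d N C).
Proof.
have cost_diff := hsearch_cost_diff hN hC0 hChier hd.
split=> [Ql Qu Ql_ge0 le_lu Qu_lt|Q s n _ hQ hQb p q hp hq].
  by apply: cost_diff; apply/andP; split; lra.
have step i : (i < n)%N ->
    `|(Ctot C (hsearch d N C (Q i.+1)) - Ctot C (hsearch d N C (Q i))) - s|
      < Delta d N C.
  move=> hi; rewrite -(hQ i).
  have [? ?] := hQb _ hi; have [? ?] := hQb _ (ltnW hi).
  by apply: cost_diff; apply/andP.
rewrite mulr2n mulrDl mul1r.
apply: le_lt_trans (ler_distD s _ _) _.
by apply: ltrD; [apply: step | rewrite distrC; apply: step].
Qed.
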